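(* Let $M,N\ge 1$ be integers and let $\mathcal{X}=\{\mathrm{x}_1,\dots,\mathrm{x}_M\}$ and $\mathcal{Y}=\{\mathrm{y}_1,\dots,\mathrm{y}_N\}$ be two disjoint finite sets of points. Let $d_{\mathcal{X}}:\mathcal{X}\times\mathcal{X}\to\mathbb{R}^+$ and $d_{\mathcal{Y}}:\mathcal{Y}\times\mathcal{Y}\to\mathbb{R}^+$ be symmetric non-negative distance functions. Let $\mathrm{o}_{\mathcal{X}},\mathrm{o}_{\mathcal{Y}}$ be points (origins) and let $u_{\mathcal{X}}:\mathcal{X}\times\{\mathrm{o}_{\mathcal{X}}\}\to\mathbb{R}^+$ and $u_{\mathcal{Y}}:\mathcal{Y}\times\{\mathrm{o}_{\mathcal{Y}}\}\to\mathbb{R}^+$ be non-negative functions (distances to origin). Assume that each of the sets of values of $d_{\mathcal{X}}$, $d_{\mathcal{Y}}$, $u_{\mathcal{X}}$, $u_{\mathcal{Y}}$ contains at least one non-zero value. Let $f:\mathcal{X}\times\mathcal{Y}\to\mathbb{R}^+$ be a non-negative function which is not identically $0$, and write $p(\mathrm{x},\mathrm{y})=p(\mathrm{y},\mathrm{x})=f(\mathrm{x},\mathrm{y})$ for $\mathrm{x}\in\mathcal{X},\mathrm{y}\in\mathcal{Y}$. Let $\mathrm{o}\notin\mathcal{X}\cup\mathcal{Y}$ be a further (theoretical origin) point and $\mathcal{W}=\mathcal{X}\cup\mathcal{Y}\cup\{\mathrm{o}\}$, which has $S=M+N+1$ elements. Then there exists $\varepsilon>0$ such that the symmetric function $f^{\varepsilon}:\mathcal{W}\times\mathcal{W}\to\mathbb{R}^+$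 defined by $$f^{\varepsilon}(\mathrm{w},\mathrm{w}')=\begin{cases}0 & \text{if } \mathrm{w}=\mathrm{w}',\\ \big(u_{\mathcal{A}}(\mathrm{w},\mathrm{o}_{\mathcal{A}})^2+\varepsilon\big)^{1/2} & \text{if } \mathrm{w}\in\mathcal{A},\ \mathrm{w}'=\mathrm{o}\ \text{(or vice versa)},\ \mathcal{A}\in\{\mathcal{X},\mathcal{Y}\},\\ \big(d_{\mathcal{A}}(\mathrm{w},\mathrm{w}')^2+\varepsilon\big)^{1/2} & \text{if } \mathrm{w}\neq\mathrm{w}',\ \mathrm{w},\mathrm{w}'\in\mathcal{A},\ \mathcal{A}\in\{\mathcal{X},\mathcal{Y}\},\\ \big(p(\mathrm{w},\mathrm{w}')^2+\varepsilon\big)^{1/2} & \text{if } \mathrm{w}\in\mathcal{X},\mathrm{w}'\in\mathcal{Y} \text{ or vice versa},\end{cases}$$ has the property that $\mathcal{W}$ can be embedded into the Euclidean space $\mathbb{R}^{Q}$, $Q=M+N+2$, with respect to $f^{\varepsilon}$; that is, there is a map $\phi:\mathcal{W}\to\mathbb{R}^{Q}$ which is a bijection onto its image such that $\|\phi(\mathrm{w})-\phi(\mathrm{w}')\|_{\mathbb{R}^Q}=f^{\varepsilon}(\mathrm{w},\mathrm{w}')$ for all $\mathrm{w},\mathrm{w}'\in\mathcal{W}$.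
   Context: $\mathbb{R}^+$ denotes the non-negative reals and $\|\cdot\|_{\mathbb{R}^Q}$ the Euclidean norm. A set $\mathcal{V}$ equipped with a symmetric non-negative function $h$ on $\mathcal{V}\times\mathcal{V}$ is said to be embeddable into $\mathbb{R}^Q$ with respect to $h$ if there is a bijection $\phi$ from $\mathcal{V}$ onto a subset of $\mathbb{R}^Q$ with $\|\phi(\mathrm{v})-\phi(\mathrm{v}')\|=h(\mathrm{v},\mathrm{v}')$ for all $\mathrm{v},\mathrm{v}'\in\mathcal{V}$. *)

From HB Require Import structures.
From mathcomp Require Import all_boot all_order all_algebra.
From mathcomp Require Import reals.
Set Implicit Arguments. Unset Strict Implicit. Unset Printing Implicit Defensive.
Import Order.TTheory GRing.Theory Num.Theory.
Local Open Scope ring_scope.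

(* The point set W = X ∪ Y ∪ {o}: [Some (inl i)] is x_(i+1), [Some (inr j)]
   is y_(j+1), [None] is the theoretical origin o.  The sum type makes X and Y
   disjoint and o outside X ∪ Y. *)
Definition Wpt (M N : nat) := option ('I_M + 'I_N)%type.

Definition eucl_norm (R : realType) (n : nat) (v : 'rV[R]_n) : R :=
  Num.sqrt (\sum_(i < n) v ord0 i ^+ 2).

Definition feps (R : realType) (M N : nat)
  (dX : 'I_M -> 'I_M -> R) (dY : 'I_N -> 'I_N -> R)
  (uX : 'I_M -> R) (uY : 'I_N -> R) (f : 'I_M -> 'I_N -> R) (eps : R)
  (w w' : Wpt M N) : R :=
  match w, w' with
  | None, None => 0
  | Some (inl i), None | None, Some (inl i) => Num.sqrt (uX i ^+ 2 + eps)
  | Some (inr j), None | None, Some (inr j) => Num.sqrt (uY j ^+ 2 + eps)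
  | Some (inl i), Some (inl i') =>
      if i == i' then 0 else Num.sqrt (dX i i' ^+ 2 + eps)
  | Some (inr j), Some (inr j') =>
      if j == j' then 0 else Num.sqrt (dY j j' ^+ 2 + eps)
  | Some (inl i), Some (inr j) | Some (inr j), Some (inl i) =>
      Num.sqrt (f i j ^+ 2 + eps)
  end.

Definition embeddable (R : realType) (V : Type) (Q : nat) (h : V -> V -> R) :=
  exists phi : V -> 'rV[R]_Q,
    injective phi /\ forall v v', eucl_norm (phi v - phi v') = h v v'.

From mathcomp Require Import all_boot all_order all_algebra.
From mathcomp Require Import reals ring lra.
Set Implicit Arguments. Unset Strict Implicit. Unset Printing Implicit Defensive.
Import Order.TTheory GRing.Theory Num.Theory.
Local Open Scope ring_scope.

(* For w <> w' we need points v_w with |v_w - v_w'|^2 = c(w, w') + eps, where c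
   is the squared unperturbed dissimilarity.  Such points exist iff the matrix
   G = eps/2 I - c/2 is a Gram matrix V V^T, since |v_a - v_b|^2 =
   G_aa + G_bb - 2 G_ab.  Once eps exceeds every row sum of |c|, G is strictly
   diagonally dominant, and such matrices are Gram matrices: the pivot is
   positive and the Schur complement is again strictly diagonally dominant, so
   the Cholesky factorisation goes through.  The rows of V, padded with
   zeros, embed W (of size M + N + 1) into R^(M + N + 2). *)

Section DiagonallyDominant.
Variable R : realFieldType.

Definition diag_dominant n (A : 'M[R]_n) :=
  forall i, \sum_(j | j != i) `|A i j| < A i i.

Definition schur_complement n (A : 'M[R]_(1 + n)) : 'M[R]_n :=
  drsubmx A - (ulsubmx A 0 0)^-1 *: (dlsubmx A *m ursubmx A).

Variables (n : nat) (A : 'M[R]_(1 + n)).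

Lemma schur_complementE i j : schur_complement A i j =
  drsubmx A i j - dlsubmx A i 0 * ursubmx A 0 j / ulsubmx A 0 0.
Proof. by rewrite !mxE big_ord1 !mxE mulrC. Qed.

Lemma schur_complement_sym : A^T = A -> (schur_complement A)^T = schur_complement A.
Proof.
move=> sA; rewrite /schur_complement linearB linearZ /= trmx_mul.
by rewrite trmx_drsub trmx_ursub trmx_dlsub sA.
Qed.

Hypothesis dA : diag_dominant A.

Lemma diag_dominant_ulsub : \sum_j `|ursubmx A 0 j| < ulsubmx A 0 0.
Proof.
have := dA (lshift n 0); rewrite big_split_ord /= big1 ?add0r => [|i].
  by rewrite !mxE => h; under eq_bigr => j _ do rewrite /ursubmx !mxE; exact: h.
by rewrite (ord1 i) eqxx.
Qed.

Lemma diag_dominant_drsub i :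
  `|dlsubmx A i 0| + \sum_(j | j != i) `|drsubmx A i j| < drsubmx A i i.
Proof.
have := dA (rshift 1 i); rewrite big_split_ord /=.
under eq_bigl => j do rewrite eq_lrshift.
under [X in _ + X]eq_bigl => j do rewrite eq_rshift.
by rewrite big_ord1 !mxE => h; under eq_bigr => j _ do rewrite !mxE; exact: h.
Qed.

Lemma ulsubmx_gt0 : 0 < ulsubmx A 0 0.
Proof. by apply: le_lt_trans diag_dominant_ulsub; exact: sumr_ge0. Qed.

Lemma diag_dominant_schur : A^T = A -> diag_dominant (schur_complement A).
Proof.
move=> sA i; set a := ulsubmx A 0 0; set b := ursubmx A 0.
have a_gt0 : 0 < a := ulsubmx_gt0.
have dlsubE j : dlsubmx A j 0 = b j by rewrite -[A in LHS]sA -trmx_ursub mxE.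
have schurE j : schur_complement A i j = drsubmx A i j - b i * b j / a.
  by rewrite schur_complementE dlsubE.
have sum_b : \sum_(j | j != i) `|b j| + `|b i| < a.
  by have := diag_dominant_ulsub; rewrite (bigD1 i) //= addrC.
have cross : `|b i| / a * \sum_(j | j != i) `|b j| <= `|b i| - b i * b i / a.
  rewrite -[b i * b i]expr2 -real_normK ?num_real // expr2.
  have -> : `|b i| - `|b i| * `|b i| / a = `|b i| / a * (a - `|b i|).
    by field; rewrite gt_eqF.
  apply: ler_wpM2l; first by rewrite divr_ge0 // ltW.
  by rewrite lerBrDr ltW.
under eq_bigr => j _ do rewrite schurE.
rewrite schurE; apply: (@le_lt_trans _ _
    (\sum_(j | j != i) `|drsubmx A i j| + `|b i| / a * \sum_(j | j != i) `|b j|)).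
  rewrite mulr_sumr -big_split /=; apply: ler_sum => j _.
  by rewrite (le_trans (ler_normB _ _)) // !normrM normfV (gtr0_norm a_gt0) mulrAC.
move: (diag_dominant_drsub i) cross; rewrite dlsubE; clearbody a b; lra.
Qed.

End DiagonallyDominant.

Lemma diag_dominant_gram (R : rcfType) n (A : 'M[R]_n) :
  A^T = A -> diag_dominant A -> exists V : 'M_n, A = V *m V^T.
Proof.
elim: n A => [|n IH]; first by move=> A; exists 0; rewrite [A]flatmx0 [_ *m _]flatmx0.
rewrite -[n.+1]/(1 + n)%N => A sA dA.
have [V' schurE] := IH _ (schur_complement_sym sA) (diag_dominant_schur dA sA).
set a := ulsubmx A 0 0; set s := Num.sqrt a.
have a_gt0 : 0 < a := ulsubmx_gt0 dA.
have ss : s * s = a by rewrite -expr2 sqr_sqrtr ?ltW.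
have s_neq0 : s != 0 by rewrite gt_eqF ?sqrtr_gt0.
exists (block_mx s%:M 0 (s^-1 *: dlsubmx A) V').
rewrite tr_block_mx mulmx_block -[A in LHS]submxK !trmx0 !mulmx0 !mul0mx !addr0.
congr block_mx.
- by rewrite tr_scalar_mx mul_scalar_mx scale_scalar_mx ss [LHS]mx11_scalar.
- by rewrite mul_scalar_mx linearZ /= scalerA mulfV // scale1r trmx_dlsub sA.
- by rewrite tr_scalar_mx mul_mx_scalar scalerA mulfV // scale1r.
rewrite -schurE /schur_complement linearZ /= -scalemxAl -scalemxAr scalerA -invfM ss.
by rewrite trmx_dlsub sA addrC subrK.
Qed.

Section Embeddings.
Variable R : realType.

Lemma eucl_norm0 n : eucl_norm (0 : 'rV[R]_n) = 0.
Proof. by rewrite /eucl_norm big1 ?sqrtr0 // => k _; rewrite mxE expr0n. Qed.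

Lemma eucl_norm_row_mx0 m p (x : 'rV[R]_m) : eucl_norm (row_mx x (0 : 'rV_p)) = eucl_norm x.
Proof.
rewrite /eucl_norm big_split_ord /= [X in _ + X]big1 ?addr0 => [|k _].
  by under eq_bigr => k _ do rewrite row_mxEl.
by rewrite row_mxEr mxE expr0n.
Qed.

Lemma eucl_norm_gram m n (V : 'M[R]_(m, n)) a b :
  eucl_norm (row a V - row b V) =
  Num.sqrt ((V *m V^T) a a + (V *m V^T) b b - 2 * (V *m V^T) a b).
Proof.
rewrite /eucl_norm !mxE mulr_sumr -!big_split -sumrB /=; congr Num.sqrt.
by apply: eq_bigr => k _; rewrite !mxE; ring.
Qed.

Lemma eq_embeddable (T : Type) Q (h h' : T -> T -> R) :
  h =2 h' -> embeddable Q h -> embeddable Q h'.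
Proof. by move=> eq_h [phi [phi_inj phi_iso]]; exists phi; split=> // v v'; rewrite -eq_h. Qed.

Lemma embeddable_widen (T : Type) m Q (h : T -> T -> R) :
  (m <= Q)%N -> embeddable m h -> embeddable Q h.
Proof.
move=> /subnKC <- [phi [phi_inj phi_iso]].
exists (fun v => row_mx (phi v) 0); split=> [v v' /eq_row_mx[/phi_inj] //|v v'].
by rewrite opp_row_mx add_row_mx subr0 eucl_norm_row_mx0.
Qed.

Lemma embeddable_of_isometry (T : Type) Q (h : T -> T -> R) (phi : T -> 'rV_Q) :
  (forall v v', h v v' = 0 -> v = v') ->
  (forall v v', eucl_norm (phi v - phi v') = h v v') -> embeddable Q h.
Proof.
move=> h_sep phi_iso; exists phi; split=> // v v' eq_phi.
by apply: h_sep; rewrite -phi_iso eq_phi subrr eucl_norm0.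
Qed.

Lemma embeddable_sqrt_shift (T : finType) (c : T -> T -> R) (eps : R) :
  (forall w w', c w w' = c w' w) ->
  (forall w, \sum_(w' | w' != w) `|c w w'| < eps) ->
  embeddable #|T| (fun w w' => if w == w' then 0 else Num.sqrt (c w w' + eps)).
Proof.
move=> c_sym c_dom.
pose G : 'M[R]_#|T| := \matrix_(a, b)
  (if a == b then eps / 2 else - c (enum_val a) (enum_val b) / 2).
have G_sym : G^T = G by apply/matrixP => a b; rewrite !mxE eq_sym c_sym.
have G_dom : diag_dominant G.
  move=> a; rewrite mxE eqxx.
  under eq_bigr => b ab do
    rewrite mxE eq_sym (negbTE ab) normrM normrN normfV normr_nat.
  rewrite -mulr_suml ltr_pM2r ?invr_gt0 //.
  have := c_dom (enum_val a); rewrite (reindex (enum_val : 'I_#|T| -> T)) /=.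
    by under eq_bigl => b do rewrite (inj_eq enum_val_inj).
  by exists enum_rank => w _; [exact: enum_valK | exact: enum_rankK].
have [V GE] := diag_dominant_gram G_sym G_dom.
apply: (@embeddable_of_isometry _ _ _ (fun w => row (enum_rank w) V)).
  move=> w w'; case: eqP => // ww' /eqP; rewrite sqrtr_eq0 => le0; exfalso.
  have : `|c w w'| <= \sum_(w'' | w'' != w) `|c w w''|.
    by rewrite (bigD1 w') 1?eq_sym ?lerDl ?sumr_ge0 //; apply/eqP.
  by move: (c_dom w) (ler_norm (- c w w')) le0; rewrite normrN; lra.
move=> w w'; rewrite eucl_norm_gram -GE !mxE !enum_rankK !eqxx (inj_eq enum_rank_inj).
case: eqP => _; first by rewrite (_ : _ - _ = 0) ?sqrtr0 //; field.
by apply: congr1; field.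
Qed.

End Embeddings.

Section Dissimilarity.
Variables (R : realType) (M N : nat).
Variables (dX : 'I_M -> 'I_M -> R) (dY : 'I_N -> 'I_N -> R).
Variables (uX : 'I_M -> R) (uY : 'I_N -> R) (f : 'I_M -> 'I_N -> R).

Definition sqdiss (w w' : Wpt M N) : R :=
  match w, w' with
  | None, None => 0
  | Some (inl i), None | None, Some (inl i) => uX i ^+ 2
  | Some (inr j), None | None, Some (inr j) => uY j ^+ 2
  | Some (inl i), Some (inl i') => dX i i' ^+ 2
  | Some (inr j), Some (inr j') => dY j j' ^+ 2
  | Some (inl i), Some (inr j) | Some (inr j), Some (inl i) => f i j ^+ 2
  end.

Lemma sqdiss_sym :
  (forall i i', dX i i' = dX i' i) -> (forall j j', dY j j' = dY j' j) ->
  forall w w', sqdiss w w' = sqdiss w' w.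
Proof. by move=> dX_sym dY_sym [[i|j]|] [[i'|j']|] //=; rewrite 1?dX_sym 1?dY_sym. Qed.

Lemma fepsE eps (w w' : Wpt M N) : feps dX dY uX uY f eps w w' =
  if w == w' then 0 else Num.sqrt (sqdiss w w' + eps).
Proof. by case: w => [[i|j]|]; case: w' => [[i'|j']|]. Qed.

End Dissimilarity.

Theorem theorem3 (R : realType) (M N : nat) (hM : (0 < M)%N) (hN : (0 < N)%N)
  (dX : 'I_M -> 'I_M -> R) (dY : 'I_N -> 'I_N -> R)
  (uX : 'I_M -> R) (uY : 'I_N -> R) (f : 'I_M -> 'I_N -> R)
  (dX_sym : forall i i', dX i i' = dX i' i)
  (dY_sym : forall j j', dY j j' = dY j' j)
  (dX_ge0 : forall i i', 0 <= dX i i')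
  (dY_ge0 : forall j j', 0 <= dY j j')
  (uX_ge0 : forall i, 0 <= uX i)
  (uY_ge0 : forall j, 0 <= uY j)
  (f_ge0 : forall i j, 0 <= f i j)
  (dX_nz : exists i i', dX i i' != 0)
  (dY_nz : exists j j', dY j j' != 0)
  (uX_nz : exists i, uX i != 0)
  (uY_nz : exists j, uY j != 0)
  (f_nz : exists i j, f i j != 0) :
  exists eps : R, 0 < eps /\
    embeddable (M + N + 2)%N (feps dX dY uX uY f eps).
Proof.
pose c := sqdiss dX dY uX uY f.
pose eps := 1 + \sum_w \sum_w' `|c w w'|.
have c_dom w : \sum_(w' | w' != w) `|c w w'| < eps.
  rewrite ltr_pwDl //; apply: (@le_trans _ _ (\sum_w' `|c w w'|)).
    by rewrite [X in _ <= X](bigD1 w) //= lerDr.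
  rewrite [X in _ <= X](bigD1 w) //= lerDl sumr_ge0 // => v _.
  exact: sumr_ge0.
exists eps; split; first by rewrite ltr_pwDl ?sumr_ge0 // => w _; rewrite sumr_ge0.
have card_W : (#|{: Wpt M N}| <= M + N + 2)%N.
  by rewrite card_option card_sum !card_ord addn2.
apply: embeddable_widen card_W _.
apply: eq_embeddable (embeddable_sqrt_shift (sqdiss_sym uX uY f dX_sym dY_sym) c_dom).
by move=> w w'; rewrite fepsE.
Qed.
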